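(* Let $F$ be a quantifier-free formula and let $\mathbf c$ be a finite set of object constants containing every object constant occurring in $F$. Then the formula $(F\land\mathit{in}_{\mathbf c}(\mathrm{NS}(F)))\rightarrow F^*(\mathbf e_{\mathbf c})$ is logically valid.
   Context: Formulas are first-order formulas with object constants, predicate constants and equality but no function constants of arity $>0$; primitive connectives are $\bot,\land,\lor,\rightarrow$ ($\neg F$ is $F\rightarrow\bot$, $\top$ is $\bot\rightarrow\bot$). Let $\mathbf p=p_1,\dots,p_n$ be the predicate constants occurring in $F$ and $\mathbf u=u_1,\dots,u_n$ predicate variables of matching arities. $F^*(\mathbf u)$ is defined recursively: $p_i(\mathbf t)^*=u_i(\mathbf t)$; $(t_1=t_2)^*=(t_1=t_2)$; $\bot^*=\bot$; $(G\land H)^*=G^*\land H^*$; $(G\lor H)^*=G^*\lor H^*$; $(G\rightarrow H)^*=(G^*\rightarrow H^* )\land(G\rightarrow H)$; $(\forall xG)^*=\forall xG^*$; $(\exists xG)^*=\exists xG^*$. For a finite set $\mathbf c$ of object constants, $\mathit{in}_{\mathbf c}(x_1,\dots,x_m)$ denotes $\bigwedge_{1\le j\le m}\bigvee_{c\in\mathbf c}x_j=c$; for a finite set $V$ of variables, $\mathit{in}_{\mathbf c}(V)$ denotes $\mathit{in}_{\mathbf c}$ applied to the variables of $V$ (the empty conjunction being $\top$). $\mathbf e_{\mathbf c}$ denotes the list of predicate expressions $\lambda\mathbf x(p_i(\mathbf x)\land\mathit{in}_{\mathbf c}(\mathbf x))$, and $F^*(\mathbf e_{\mathbf c})$ is the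 result of replacing each atomic part $u_i(\mathbf t)$ of $F^*(\mathbf u)$ by $p_i(\mathbf t)\land\mathit{in}_{\mathbf c}(\mathbf t)$. Restricted variables: $\mathrm{RV}(G)$ for quantifier-free $G$: if $G$ is an equality between two variables, $\mathrm{RV}(G)=\emptyset$; if $G$ is any other atomic formula, $\mathrm{RV}(G)$ is the set of variables occurring in $G$; $\mathrm{RV}(\bot)=\emptyset$; $\mathrm{RV}(G\land H)=\mathrm{RV}(G)\cup\mathrm{RV}(H)$; $\mathrm{RV}(G\lor H)=\mathrm{RV}(G)\cap\mathrm{RV}(H)$; $\mathrm{RV}(G\rightarrow H)=\emptyset$. An occurrence of a variable in a formula is strictly positive if it is not in the antecedent of any implication. A variable $x$ occurring in a quantifier-free formula $F$ is semi-safe in $F$ if every strictly positive occurrence of $x$ in $F$ belongs to a subformula $G\rightarrow H$ of $F$ with $x\in\mathrm{RV}(G)$. $\mathrm{NS}(F)$ is the set of variables of $F$ that are not semi-safe in $F$. *)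

From Stdlib Require Import List Arith Bool.
Import ListNotations.

Inductive term : Type :=
| Var : nat -> term
| Cst : nat -> term.

Inductive formula : Type :=
| Pred : nat -> list term -> formula
| Eq   : term -> term -> formula
| Bot  : formula
| And  : formula -> formula -> formula
| Or   : formula -> formula -> formula
| Imp  : formula -> formula -> formula
| All  : nat -> formula -> formula
| Ex   : nat -> formula -> formula.

Definition Top : formula := Imp Bot Bot.

Fixpoint qfree (F : formula) : bool :=
  match F with
  | Pred _ _ | Eq _ _ | Bot => true
  | And G H | Or G H | Imp G H => qfree G && qfree H
  | All _ _ | Ex _ _ => false
  end.

Definition term_consts (t : term) : list nat :=
  match t with Var _ => [] | Cst c => [c] end.
Definition term_vars (t : term) : list nat :=
  match t with Var x => [x] | Cst _ => [] end.

Fixpoint consts (F : formula) : list nat :=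
  match F with
  | Pred _ ts => flat_map term_consts ts
  | Eq t1 t2 => term_consts t1 ++ term_consts t2
  | Bot => []
  | And G H | Or G H | Imp G H => consts G ++ consts H
  | All _ G | Ex _ G => consts G
  end.

Fixpoint vars_raw (F : formula) : list nat :=
  match F with
  | Pred _ ts => flat_map term_vars ts
  | Eq t1 t2 => term_vars t1 ++ term_vars t2
  | Bot => []
  | And G H | Or G H | Imp G H => vars_raw G ++ vars_raw H
  | All x G | Ex x G => x :: vars_raw G
  end.
Definition vars (F : formula) : list nat := nodup Nat.eq_dec (vars_raw F).

Definition memb (x : nat) (l : list nat) : bool := existsb (Nat.eqb x) l.

Definition in_one (cs : list nat) (t : term) : formula :=
  fold_right (fun c acc => Or (Eq t (Cst c)) acc) Bot cs.
Definition in_c (cs : list nat) (ts : list term) : formula :=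
  fold_right (fun t acc => And (in_one cs t) acc) Top ts.

(* F^*(u), parameterised by what each atomic part u_i(t) is replaced with:
   [sub p ts] is the formula substituted for u_p(ts). *)
Fixpoint star (sub : nat -> list term -> formula) (F : formula) : formula :=
  match F with
  | Pred p ts => sub p ts
  | Eq t1 t2 => Eq t1 t2
  | Bot => Bot
  | And G H => And (star sub G) (star sub H)
  | Or G H => Or (star sub G) (star sub H)
  | Imp G H => And (Imp (star sub G) (star sub H)) (Imp G H)
  | All x G => All x (star sub G)
  | Ex x G => Ex x (star sub G)
  end.

Definition e_c (cs : list nat) : nat -> list term -> formula :=
  fun p ts => And (Pred p ts) (in_c cs ts).

Definition is_var (t : term) : bool := match t with Var _ => true | Cst _ => false end.

Fixpoint RV (F : formula) (x : nat) : bool :=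
  match F with
  | Pred _ ts => memb x (flat_map term_vars ts)
  | Eq t1 t2 => if is_var t1 && is_var t2 then false
                else memb x (term_vars t1 ++ term_vars t2)
  | Bot => false
  | And G H => RV G x || RV H x
  | Or G H => RV G x && RV H x
  | Imp _ _ => false
  | All _ _ | Ex _ _ => false   (* RV is only defined for quantifier-free formulas *)
  end.

(* [unprotected F x] : some strictly positive occurrence of x in F does NOT
   belong to a subformula G -> H of F with x in RV(G).  Occurrences inside an
   antecedent are not strictly positive; an occurrence in the consequent H of
   G -> H is protected by that implication when x in RV(G), and otherwise may
   still be protected by an implication nested inside H. *)
Fixpoint unprotected (F : formula) (x : nat) : bool :=
  match F with
  | Pred _ ts => memb x (flat_map term_vars ts)
  | Eq t1 t2 => memb x (term_vars t1 ++ term_vars t2)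
  | Bot => false
  | And G H | Or G H => unprotected G x || unprotected H x
  | Imp G H => if RV G x then false else unprotected H x
  | All _ G | Ex _ G => unprotected G x
  end.

Definition semi_safe (F : formula) (x : nat) : Prop := unprotected F x = false.

Definition NS (F : formula) : list nat :=
  filter (fun x => unprotected F x) (vars F).

Record interp (D : Type) : Type := {
  icst : nat -> D;
  ipred : nat -> list D -> Prop
}.

Definition eval_term {D} (I : interp D) (a : nat -> D) (t : term) : D :=
  match t with Var x => a x | Cst c => icst D I c end.

Definition upd {D} (a : nat -> D) (x : nat) (d : D) : nat -> D :=
  fun y => if Nat.eqb y x then d else a y.

Fixpoint sat {D} (I : interp D) (a : nat -> D) (F : formula) : Prop :=
  match F with
  | Pred p ts => ipred D I p (map (eval_term I a) ts)
  | Eq t1 t2 => eval_term I a t1 = eval_term I a t2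
  | Bot => False
  | And G H => sat I a G /\ sat I a H
  | Or G H => sat I a G \/ sat I a H
  | Imp G H => sat I a G -> sat I a H
  | All x G => forall d : D, sat I (upd a x d) G
  | Ex x G => exists d : D, sat I (upd a x d) G
  end.

(* logically valid: true in every interpretation (nonempty domain, witnessed
   by the assignment) under every assignment to the free variables *)
Definition valid (F : formula) : Prop :=
  forall (D : Type) (I : interp D) (a : nat -> D), sat I a F.

(* By induction on F, under the invariant that every variable with an
   unprotected occurrence in F denotes an element named by a constant of c.
   Atoms of F then hold in F^*(e_c), since all their arguments are named.
   For an implication G -> H, the conjunct G -> H of its translation is
   given, and G^*(e_c) -> H^*(e_c) follows from the induction hypothesis for
   H: G^*(e_c) implies G, and it also forces every variable of RV(G) to be
   named, which covers exactly the occurrences in H protected by G -> H. *)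

From Stdlib Require Import List Arith Bool.

Lemma memb_true_iff x l : memb x l = true <-> In x l.
Proof.
  unfold memb. rewrite existsb_exists. split.
  - intros [y [Hy Exy]]. apply Nat.eqb_eq in Exy. subst. exact Hy.
  - intros Hx. exists x. split; [exact Hx | apply Nat.eqb_refl].
Qed.

Lemma unprotected_vars_raw F x : unprotected F x = true -> In x (vars_raw F).
Proof.
  induction F; simpl; intros Hx; try discriminate.
  - now apply memb_true_iff.
  - now apply memb_true_iff.
  - apply orb_true_iff in Hx as [Hx | Hx]; apply in_or_app; auto.
  - apply orb_true_iff in Hx as [Hx | Hx]; apply in_or_app; auto.
  - destruct (RV F1 x); [discriminate |]. apply in_or_app; auto.
  - right; auto.
  - right; auto.
Qed.

Lemma in_NS F x : unprotected F x = true -> In x (NS F).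
Proof.
  intros Hx. apply filter_In. split; [| exact Hx].
  apply nodup_In, unprotected_vars_raw, Hx.
Qed.

Section Semantics.

Variables (D : Type) (I : interp D).

Lemma sat_star_weaken (sub : nat -> list term -> formula) :
  (forall a p ts, sat I a (sub p ts) -> sat I a (Pred p ts)) ->
  forall F a, sat I a (star sub F) -> sat I a F.
Proof.
  intros Hsub F. induction F; simpl; intros a H; firstorder.
Qed.

Variable cs : list nat.

Definition named (d : D) : Prop := exists c, In c cs /\ d = icst D I c.

Lemma sat_in_one a t : sat I a (in_one cs t) <-> named (eval_term I a t).
Proof.
  unfold named, in_one. induction cs as [| c cs' IH]; simpl.
  - split; [tauto | intros [c [[] _]]].
  - rewrite IH. split.
    + intros [H | [c' [Hc' H]]]; [exists c | exists c']; auto.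
    + intros [c' [[<- | Hc'] H]]; [left | right; exists c']; auto.
Qed.

Lemma sat_in_c a ts :
  sat I a (in_c cs ts) <-> (forall t, In t ts -> named (eval_term I a t)).
Proof.
  induction ts as [| t ts IH]; simpl.
  - split; [intros _ t [] | tauto].
  - fold (in_c cs ts). rewrite IH, sat_in_one. split.
    + intros [Ht Hts] t' [<- | Ht']; auto.
    + intros H. split; auto.
Qed.

Lemma sat_star_e_c_sat F a : sat I a (star (e_c cs) F) -> sat I a F.
Proof. apply sat_star_weaken. intros a' p ts [H _]. exact H. Qed.

Lemma RV_named G a x :
  incl (consts G) cs -> sat I a (star (e_c cs) G) -> RV G x = true ->
  named (a x).
Proof.
  induction G; simpl; intros Hc H Hx; try discriminate.
  - destruct H as [_ H]. rewrite sat_in_c in H.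
    apply memb_true_iff, in_flat_map in Hx as [[y | c] [Ht Hy]];
      simpl in Hy; [| contradiction].
    destruct Hy as [<- | []]. exact (H _ Ht).
  - destruct (is_var t && is_var t0) eqn:Evar; [discriminate |].
    apply memb_true_iff in Hx.
    destruct t as [y | c], t0 as [z | d]; simpl in *; try discriminate;
      try contradiction; destruct Hx as [<- | []].
    + exists d. split; [apply Hc; simpl; auto | exact H].
    + exists c. split; [apply Hc; simpl; auto | auto].
  - apply incl_app_inv in Hc as [Hc1 Hc2]. destruct H.
    apply orb_true_iff in Hx as [Hx | Hx]; eauto.
  - apply incl_app_inv in Hc as [Hc1 Hc2]. apply andb_true_iff in Hx as [Hx1 Hx2].
    destruct H; eauto.
Qed.

Lemma sat_star_e_c F a :
  qfree F = true -> incl (consts F) cs ->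
  (forall x, unprotected F x = true -> named (a x)) ->
  sat I a F -> sat I a (star (e_c cs) F).
Proof.
  induction F; simpl; intros Hq Hc Hu H; try discriminate; auto;
    try (apply andb_true_iff in Hq as [Hq1 Hq2];
         apply incl_app_inv in Hc as [Hc1 Hc2]).
  - split; [exact H |]. apply sat_in_c. intros [y | c] Ht; simpl.
    + apply Hu, memb_true_iff, in_flat_map. exists (Var y). simpl; auto.
    + exists c. split; [| reflexivity].
      apply Hc, in_flat_map. exists (Cst c). simpl; auto.
  - destruct H. split; [apply IHF1 | apply IHF2]; auto;
      intros x Hx; apply Hu, orb_true_iff; auto.
  - destruct H; [left; apply IHF1 | right; apply IHF2]; auto;
      intros x Hx; apply Hu, orb_true_iff; auto.
  - split; [| exact H]. intros HG. apply IHF2; auto.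
    + intros x Hx. destruct (RV F1 x) eqn:Erv.
      * exact (RV_named F1 a x Hc1 HG Erv).
      * apply Hu. rewrite Erv. exact Hx.
    + apply H, (sat_star_e_c_sat F1 a HG).
Qed.

End Semantics.

Theorem lemma3 (F : formula) (cs : list nat) :
  qfree F = true ->
  (forall c, In c (consts F) -> In c cs) ->
  valid (Imp (And F (in_c cs (map Var (NS F)))) (star (e_c cs) F)).
Proof.
  intros Hq Hc D I a [HF Hin]. apply sat_star_e_c; auto.
  intros x Hx. rewrite sat_in_c in Hin.
  apply (Hin (Var x)), in_map, in_NS, Hx.
Qed.
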